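(* Let $\Delta$ be a finite set of quantifier-free insertion queries over the graph schema $\{E\}$. Then $(q_{\mathrm{Reach}},\Delta\cup\Delta_E)$ can be maintained in DynFO for directed acyclic graphs. Furthermore, this can be done by a program such that for every quantifier-free insertion query $\rho(\bar p)$ in $\Delta$ there is a first-order formula $\gamma_\rho(\bar p)$ over the input and auxiliary schema (a guard) such that in every state reached for an acyclic graph $G$ and every tuple $\bar a$, $\gamma_\rho(\bar a)$ holds if and only if $\rho(\bar a)(G)$ contains a cycle.
   Context: Framework. A schema $\tau$ consists of relation symbols with arities and constant symbols; a database over $\tau$ with a finite domain $D$ interprets them. A replacement rule for a relation symbol $R$ is $R := \mu_R(\bar p;\bar x)$, where $\mu_R$ is a first-order formula over $\tau$, $\bar x$ has the arity of $R$, and $\bar p$ is a tuple of parameter variables. A replacement query $\rho(\bar p)$ is a set of replacement rules for distinct relation symbols, all with the same parameter tuple $\bar p$; it is parameter-free if $\bar p$ is empty, and quantifier-free (resp. existential, i.e. in $\mathrm{FO}[\exists^*]$) if all its formulas are. A change $\delta=\rho(\bar a)$ consists of a replacement query $\rho$ and a tuple $\bar a$ of domain elements of the arity of $\bar p$; $\delta(\mathcal D)$ is obtained from $\mathcal D$ by replacing every relation $R$ having a rule in $\rho$ by $\{\bar b : \mathcal D\models \mu_R(\bar a;\bar b)\}$. An insertion query is one in which every $\mu_R$ has the form $R(\bar x)\lor\varphi_R$; a deletion query one in which every $\mu_R$ has the form $R(\bar x)\land\varphi_R$. The single-tuple insertion $\mathrm{ins}_R(\bar p)$ is $R:=R(\bar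 x)\lor \bar x=\bar p$, the single-tuple deletion $\mathrm{del}_R(\bar p)$ is $R:=R(\bar x)\land\neg(\bar x=\bar p)$; $\Delta_\tau$ is the set of all single-tuple insertions and deletions for the relation symbols of $\tau$ ($\Delta_E$ for graphs with edge relation $E$). A dynamic program with input schema $\tau_{in}$ and auxiliary schema $\tau_{aux}$ operates on states $(D,\mathcal I,\mathcal A)$ consisting of an input database $\mathcal I$ and an auxiliary database $\mathcal A$ over a common fixed finite domain $D$. For every allowed replacement query $\rho(\bar p)$ and every auxiliary symbol $T$ it has an update formula $\varphi_T(\bar p;\bar x)$ over $\tau_{in}\cup\tau_{aux}$. On a change $\delta=\rho(\bar a)$ the new state has input $\delta(\mathcal I)$ and each $T$ becomes $\{\bar b : (\mathcal I,\mathcal A)\models\varphi_T(\bar a,\bar b)\}$, evaluated in the old state. A dynamic query is a pair $(q,\Delta)$ of a query $q$ and a set $\Delta$ of replacement queries. A program maintains $(q,\Delta)$, $q$ of arity $k$, if it has a $k$-ary auxiliary relation $Q$ such that for every domain, starting from the empty input and empty auxiliary database, after every nonempty sequence $\alpha$ of changes from $\Delta$ the relation $Q$ equals $q(\alpha(\mathcal I_\emptyset))$. DynFO is the class of dynamic queries maintainable with first-order update formulas; DynProp with quantifier-free update formulas. When maintenance is ''for'' a class of inputs, only change sequences all of whose intermediate inputs lie in that class are considered. Graphs are structures with one binary relation $E$; $q_{\mathrm{Reach}}$ maps a directed graph to the set of pairs $(u,v)$ such that there is a directed path from $u$ to $v$. *)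

From HB Require Import structures.
From mathcomp Require Import all_boot.
Set Implicit Arguments. Unset Strict Implicit. Unset Printing Implicit Defensive.

Inductive sym := SymE | SymAux of nat.

(* First-order formulas; variables are de Bruijn indices (nat).
   At top level a formula is evaluated in an environment (list of domain
   elements); index i denotes the i-th entry, and each quantifier pushes
   the quantified element at index 0. *)
Inductive formula :=
| FTrue | FFalse
| FRel of sym & seq nat
| FEq of nat & nat
| FNot of formula
| FAnd of formula & formula
| FOr of formula & formula
| FEx of formula
| FAll of formula.

Fixpoint qf (f : formula) : bool :=
  match f with
  | FEx _ | FAll _ => false
  | FNot g => qf g
  | FAnd g h | FOr g h => qf g && qf h
  | _ => true
  end.

Fixpoint input_only (f : formula) : bool :=
  match f with
  | FRel (SymAux _) _ => false
  | FNot g | FEx g | FAll g => input_only g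
  | FAnd g h | FOr g h => input_only g && input_only h
  | _ => true
  end.

(* A replacement query over {E}: parameter arity rq_par and the rule
   E := rq_mu(p; x1, x2).  In rq_mu the parameters p_0..p_{m-1} are the
   variables 0..m-1 and x1, x2 are the variables m and m+1. *)
Record rquery := RQ { rq_par : nat; rq_mu : formula }.

Definition ins_E : rquery :=
  RQ 2 (FOr (FRel SymE [:: 2; 3]) (FAnd (FEq 0 2) (FEq 1 3))).
Definition del_E : rquery :=
  RQ 2 (FAnd (FRel SymE [:: 2; 3]) (FNot (FAnd (FEq 0 2) (FEq 1 3)))).

Definition is_qf_insertion (r : rquery) : Prop :=
  qf (rq_mu r) /\ input_only (rq_mu r) /\
  exists phi, rq_mu r = FOr (FRel SymE [:: rq_par r; (rq_par r).+1]) phi.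

Fixpoint mem_rq (r : rquery) (l : seq rquery) : Prop :=
  match l with [::] => False | r' :: l' => r = r' \/ mem_rq r l' end.

(* Update formula for (rho, T_i) is evaluated in the
   environment p ++ x (parameters first, then the tuple of T_i). *)
Record dynprog := DynProg {
  aux_ar : seq nat;
  q_idx : nat;
  upd : rquery -> nat -> formula }.

Section Sem.
Variable D : finType.

Record state := State { st_E : rel D; st_aux : nat -> seq D -> bool }.

Definition interp (s : state) (r : sym) (t : seq D) : bool :=
  match r with
  | SymE => if t is [:: a; b] then st_E s a b else false
  | SymAux i => st_aux s i t
  end.

Fixpoint eval (s : state) (env : seq D) (f : formula) : bool :=
  match f with
  | FTrue => true
  | FFalse => false
  | FRel r args =>
      let t := pmap (onth env) args in (size t == size args) && interp s r t
  | FEq i j =>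
      match onth env i, onth env j with
      | Some a, Some b => a == b
      | _, _ => false
      end
  | FNot g => ~~ eval s env g
  | FAnd g h => eval s env g && eval s env h
  | FOr g h => eval s env g || eval s env h
  | FEx g => [exists d, eval s (d :: env) g]
  | FAll g => [forall d, eval s (d :: env) g]
  end.

Definition input_state (e : rel D) : state := State e (fun _ _ => false).

Definition apply_change (r : rquery) (a : seq D) (e : rel D) : rel D :=
  fun b1 b2 => eval (input_state e) (a ++ [:: b1; b2]) (rq_mu r).

Definition has_cycle (e : rel D) : Prop := exists u v, e u v && connect e v u.
Definition acyclic (e : rel D) : Prop := ~ has_cycle e.

Definition reachQ (e : rel D) (t : seq D) : bool :=
  if t is [:: u; v] then connect e u v else false.

Definition init_state : state := State (fun _ _ => false) (fun _ _ => false).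

Definition step (P : dynprog) (c : rquery * seq D) (s : state) : state :=
  State (apply_change c.1 c.2 (st_E s))
        (fun i t => [&& i < size (aux_ar P), size t == nth 0 (aux_ar P) i
                      & eval s (c.2 ++ t) (upd P c.1 i)]).

Definition run (P : dynprog) (alpha : seq (rquery * seq D)) : state :=
  foldl (fun s c => step P c s) init_state alpha.

Fixpoint good_run (P : dynprog) (Dl : seq rquery) (s : state)
    (alpha : seq (rquery * seq D)) : Prop :=
  match alpha with
  | [::] => True
  | c :: alpha' =>
      [/\ mem_rq c.1 Dl, size c.2 = rq_par c.1,
          acyclic (st_E (step P c s)) & good_run P Dl (step P c s) alpha']
  end.

End Sem.

Definition maintains_reach_dag (P : dynprog) (Dl : seq rquery) : Prop :=
  (q_idx P < size (aux_ar P)) /\ nth 0 (aux_ar P) (q_idx P) = 2 /\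
  forall (D : finType) (alpha : seq (rquery * seq D)),
    alpha <> [::] -> good_run P Dl (init_state D) alpha ->
    st_aux (run P alpha) (q_idx P) =1 reachQ (st_E (run P alpha)).

From HB Require Import structures.
From mathcomp Require Import all_boot zify.
Set Implicit Arguments. Unset Strict Implicit. Unset Printing Implicit Defensive.

(* The program keeps the reachability relation T of the current acyclic graph E.
   An insertion rho(a) adds the edges given by a quantifier-free phi(a; x, y).  The
   profile of a vertex over a (its E-links and equalities with the parameters, and
   its loop bit) takes boundedly many values, and as phi is quantifier free, whether
   an unlinked pair x, y (distinct and not E-adjacent) becomes an edge depends only
   on the profiles of x and y.  A path of the new graph alternates E-paths with new
   edges between unlinked pairs; if two of these edges have the same pair of
   profiles, the first one can be redirected to the target of the second, or else
   the two close a shorter cycle.  So in an acyclic new graph a path needs at most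
   K^2 new edges, K the number of profiles, and new reachability is the 2K^2-fold
   iterate of "T(x, y) or phi(a; x, y)", a first-order formula.  The same shortening
   applied to a cycle closed by one new edge gives the guard.  Single-edge
   insertions are quantifier-free insertions, and deletions use the classical
   first-order update of reachability in acyclic graphs. *)

(** * Bounded reachability after inserting profile-determined edges *)

Lemma size_descent (T : Type) (P : seq T -> Prop) (b : pred (seq T)) :
  (exists s, P s) -> (forall s, P s -> ~~ b s -> exists2 s', P s' & size s' < size s) ->
  exists2 s, P s & b s.
Proof.
move=> [s Ps] shrink; have [n] := ubnP (size s); elim: n s Ps => // n IH s Ps /ltnSE le_sn.
have [bs|nbs] := boolP (b s); first by exists s.
have [s' Ps' lt_s's] := shrink s Ps nbs.
exact: IH Ps' (leq_trans lt_s's le_sn).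
Qed.

Lemma not_uniq_map_split (T T' : eqType) (f : T -> T') (s : seq T) :
  ~~ uniq (map f s) -> exists s1 z1 s2 z2 s3,
    s = s1 ++ z1 :: s2 ++ z2 :: s3 /\ f z1 = f z2.
Proof.
elim: s => [|a s IH] //=; rewrite negb_and negbK => /orP[/mapP[z2 z2s fa]|/IH].
  by case/splitPr: z2s => s2 s3; exists [::], a, s2, z2, s3.
by move=> [s1 [z1 [s2 [z2 [s3 [-> e]]]]]]; exists (a :: s1), z1, s2, z2, s3.
Qed.

Section RelPow.
Variable D : finType.
Implicit Types R : rel D.

(* [rel_pow R n] is R^(n+1), the composition of n.+1 copies of R. *)
Fixpoint rel_pow R n : rel D :=
  if n is n'.+1 then fun x y => [exists z, R x z && rel_pow R n' z y] else R.

Lemma eq_rel_pow R R' : R =2 R' -> forall n, rel_pow R n =2 rel_pow R' n.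
Proof.
move=> eR; elim=> [|n IH] x y /=; first exact: eR.
by apply: eq_existsb => z; rewrite eR IH.
Qed.

Lemma rel_powS R n x z y : R x z -> rel_pow R n z y -> rel_pow R n.+1 x y.
Proof. by move=> Rxz Rzy; apply/existsP; exists z; rewrite Rxz. Qed.

Lemma rel_pow_leq R : (forall x, R x x) ->
  forall n m x y, n <= m -> rel_pow R n x y -> rel_pow R m x y.
Proof.
move=> Rrefl n m x y /subnK <-; elim: (m - n) => //= k IH Rxy.
exact: rel_powS (Rrefl x) (IH Rxy).
Qed.

Lemma rel_pow_connect R (G : rel D) :
  subrel R (connect G) -> forall n x y, rel_pow R n x y -> connect G x y.
Proof.
move=> RG; elim=> [|n IH] x y /=; first exact: RG.
by case/existsP=> z /andP[/RG Gxz /IH Gzy]; exact: connect_trans Gxz Gzy.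
Qed.

End RelPow.

Section Walks.
Variables (D : finType) (E G : rel D).
Hypothesis sub_EG : subrel E G.

Definition unlinked x y := [&& x != y, ~~ E x y & ~~ E y x].

Variables (K : finType) (type : D -> K).
Hypothesis G_type : forall x y x' y', type x = type x' -> type y = type y' ->
  unlinked x y -> unlinked x' y' -> G x y = G x' y'.

Lemma linked_connect x y : ~~ E x y -> ~~ unlinked x y -> connect E y x.
Proof.
rewrite /unlinked => /negbTE->; rewrite /= negb_and !negbK.
by case/orP=> [/eqP->|/connect1].
Qed.

Lemma connect_EG : subrel (connect E) (connect G).
Proof. by apply: connect_sub => x y /sub_EG /connect1. Qed.

Fixpoint walk u s v : Prop :=
  if s is z :: s' then [/\ connect E u z.1, unlinked z.1 z.2, G z.1 z.2 & walk z.2 s' v]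
  else connect E u v.

Lemma connect_walk u w s v : connect E u w -> walk w s v -> walk u s v.
Proof.
case: s => [|z s] /=; first exact: connect_trans.
by move=> Euw [Ewz *]; split=> //; exact: connect_trans Ewz.
Qed.

Lemma walk_connect u s w v : walk u s w -> connect E w v -> walk u s v.
Proof.
elim: s u => [|z s IH] u /=; first exact: connect_trans.
by case=> *; split=> //; exact: IH.
Qed.

Lemma walk_cat u s1 w s2 v : walk u s1 w -> walk w s2 v -> walk u (s1 ++ s2) v.
Proof.
elim: s1 u => [|z s1 IH] u /=; first exact: connect_walk.
by case=> Euz uz Gz W1 W2; split=> //; exact: IH W1 W2.
Qed.

Lemma walk_cat_cons u s1 z s2 v :
  walk u (s1 ++ z :: s2) v <-> [/\ walk u s1 z.1, unlinked z.1 z.2, G z.1 z.2 & walk z.2 s2 v].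
Proof.
elim: s1 u => [|z' s1 IH] u //=; split.
  by case=> Euz' uz' Gz' /IH[W1 uz Gz W2]; split.
by case=> -[Euz' uz' Gz' W1] uz Gz W2; split=> //; apply/IH.
Qed.

Lemma walk_connectG u s v : walk u s v -> connect G u v.
Proof.
elim: s u => [|z s IH] u /=; first exact: connect_EG.
case=> /connect_EG Euz _ Gz /IH Gzv.
exact: connect_trans Euz (connect_trans (connect1 Gz) Gzv).
Qed.

Lemma walk_of_connect u v : (forall x y, G x y -> E x y || unlinked x y) ->
  connect G u v -> exists s, walk u s v.
Proof.
move=> G_split /connectP[p + ->]; elim: p u => [|z p IH] u /=.
  by exists [::]; exact: connect0.
case/andP=> Guz /IH[s Ws]; have [Euz|nEuz] := boolP (E u z).
  by exists s; exact: connect_walk (connect1 Euz) Ws.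
have uuz : unlinked u z by move: (G_split _ _ Guz); rewrite (negbTE nEuz).
by exists ((u, z) :: s); split=> //; exact: connect0.
Qed.

Definition edge_type (z : D * D) := (type z.1, type z.2).

(* If two listed edges have the same type, either the first one can be redirected to
   the target of the second, or the two close a strictly shorter cycle. *)
Lemma walk_shorten u s v : walk u s v -> ~~ uniq (map edge_type s) ->
  (exists2 s', walk u s' v & size s' < size s) \/
  (exists x y s', [/\ G x y, walk y s' x & size s' < size s]).
Proof.
move=> + /not_uniq_map_split[s1 [[x y] [s2 [[x2 y2] [s3 [def_s [tx ty]]]]]]].
rewrite {}def_s => /walk_cat_cons[W1 uxy Gxy /walk_cat_cons[W2 uxy2 Gxy2 W3]] /=.
have [Exy2|nExy2] := boolP (E x y2).
  left; exists (s1 ++ s3); first exact: walk_cat (walk_connect W1 (connect1 Exy2)) W3.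
  by rewrite !size_cat /= !size_cat /=; lia.
have [uxy2'|nuxy2'] := boolP (unlinked x y2).
  left; exists (s1 ++ (x, y2) :: s3); last by rewrite !size_cat /= !size_cat /=; lia.
  by apply/walk_cat_cons; split; rewrite //= (G_type erefl (esym ty) uxy2' uxy).
right; exists x, y, (rcons s2 (x2, y2)); split=> //; last first.
  by rewrite size_rcons !size_cat /= !size_cat /=; lia.
by rewrite -cats1; apply/walk_cat_cons; split=> //=; exact: linked_connect.
Qed.

Definition hop x y := connect E x y || G x y.
Definition hop_bound := 2 * #|{: K * K}|.

Lemma hop_refl x : hop x x.
Proof. by rewrite /hop connect0. Qed.

Lemma hop_connect : subrel hop (connect G).
Proof. by move=> x y /orP[/connect_EG|/connect1]. Qed.

Lemma walk_hop u s v : walk u s v -> rel_pow hop (2 * size s) u v.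
Proof.
elim: s u => [|z s IH] u; first by rewrite /= /hop => ->.
case=> Euz _ Gz /IH Wzv; rewrite mulnS add2n.
by apply: (rel_powS (z := z.1)); [rewrite /hop Euz | apply: rel_powS Wzv; rewrite /hop Gz orbT].
Qed.

Lemma uniq_walk_hop u s v : uniq (map edge_type s) -> walk u s v ->
  rel_pow hop hop_bound u v.
Proof.
move=> /card_uniqP; rewrite size_map => card_s /walk_hop.
apply: rel_pow_leq; first exact: hop_refl.
by rewrite leq_mul2l -card_s max_card orbT.
Qed.

Lemma connect_hop u v : ~ has_cycle G -> connect G u v = rel_pow hop hop_bound u v.
Proof.
move=> acyc; apply/idP/idP; last exact: (rel_pow_connect hop_connect).
have G_split x y : G x y -> E x y || unlinked x y.
  move=> Gxy; apply/negPn/negP; rewrite negb_or => /andP[nExy /(linked_connect nExy)].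
  by move=> /connect_EG Gyx; apply: acyc; exists x, y; rewrite Gxy Gyx.
move=> /(walk_of_connect G_split) Wuv.
have [s Ws uniq_s] : exists2 s, walk u s v & uniq (map edge_type s).
  apply: size_descent Wuv _ => s Ws /(walk_shorten Ws)[//|[x [y [s' [Gxy Wyx _]]]]].
  by case: acyc; exists x, y; rewrite Gxy (walk_connectG Wyx).
exact: uniq_walk_hop uniq_s Ws.
Qed.

Lemma has_cycle_hop : has_cycle G <-> exists u v, G u v && rel_pow hop hop_bound v u.
Proof.
split=> [[u [v /andP[Guv Gvu]]]|[u [v /andP[Guv hop_vu]]]]; last first.
  by exists u, v; rewrite Guv (rel_pow_connect hop_connect hop_vu).
have [[x y] /= /andP[Gxy]|G_split] :=
  pickP (fun z : D * D => G z.1 z.2 && ~~ (E z.1 z.2 || unlinked z.1 z.2)).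
  rewrite negb_or => /andP[nExy /(linked_connect nExy) Eyx].
  have hop_yx : hop y x by rewrite /hop Eyx.
  by exists x, y; rewrite Gxy (rel_pow_leq hop_refl (leq0n _) hop_yx).
have {}G_split x y : G x y -> E x y || unlinked x y.
  by move=> Gxy; move: (G_split (x, y)); rewrite /= Gxy => /negbFE.
have [s Ws] := walk_of_connect G_split Gvu.
have [s' [u' [v' [Guv' Ws']]] uniq_s'] :
    exists2 s, (exists u v, G u v /\ walk v s u) & uniq (map edge_type s).
  apply: size_descent; first by exists s, u, v.
  move=> t [u1 [v1 [Guv1 Wt]]] /(walk_shorten Wt)[[t' Wt' lt]|[x [y [t' [Gxy Wt' lt]]]]].
    by exists t'; first by exists u1, v1.
  by exists t'; first by exists x, y.
by exists u', v'; rewrite Guv' (uniq_walk_hop uniq_s' Ws').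
Qed.

End Walks.

(** * Renaming and invariance of formulas *)

Definition up_ren (f : nat -> nat) n := if n is k.+1 then (f k).+1 else 0.

Fixpoint rename (f : nat -> nat) (g : formula) : formula :=
  match g with
  | FTrue => FTrue
  | FFalse => FFalse
  | FRel r args => FRel r (map f args)
  | FEq i j => FEq (f i) (f j)
  | FNot h => FNot (rename f h)
  | FAnd h1 h2 => FAnd (rename f h1) (rename f h2)
  | FOr h1 h2 => FOr (rename f h1) (rename f h2)
  | FEx h => FEx (rename (up_ren f) h)
  | FAll h => FAll (rename (up_ren f) h)
  end.

Fixpoint erase_aux (g : formula) : formula :=
  match g with
  | FRel (SymAux _) _ => FFalse
  | FNot h => FNot (erase_aux h)
  | FAnd h1 h2 => FAnd (erase_aux h1) (erase_aux h2)
  | FOr h1 h2 => FOr (erase_aux h1) (erase_aux h2)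
  | FEx h => FEx (erase_aux h)
  | FAll h => FAll (erase_aux h)
  | _ => g
  end.

Section Semantics.
Variable D : finType.
Implicit Types (s : state D) (env : seq D) (E : rel D).

Lemma eval_FOr s env g h : eval s env (FOr g h) = eval s env g || eval s env h.
Proof. by []. Qed.

Lemma eval_FAnd s env g h : eval s env (FAnd g h) = eval s env g && eval s env h.
Proof. by []. Qed.

Lemma eval_FEx s env g : eval s env (FEx g) = [exists d, eval s (d :: env) g].
Proof. by []. Qed.

Lemma eval_rename s g : forall f env env', (forall i, onth env (f i) = onth env' i) ->
  eval s env (rename f g) = eval s env' g.
Proof.
elim: g => //=.
- move=> r args f env env' fenv; rewrite size_map.
  suff -> : pmap (onth env) (map f args) = pmap (onth env') args by [].
  by elim: args => //= i args ->; rewrite fenv.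
- by move=> i j f env env' fenv; rewrite !fenv.
- by move=> g IH f env env' fenv; rewrite (IH f env env').
- by move=> g1 IH1 g2 IH2 f env env' fenv; rewrite (IH1 f env env') // (IH2 f env env').
- by move=> g1 IH1 g2 IH2 f env env' fenv; rewrite (IH1 f env env') // (IH2 f env env').
- by move=> g IH f env env' fenv; apply: eq_existsb => d; apply: IH => -[|i] /=.
- by move=> g IH f env env' fenv; apply: eq_forallb => d; apply: IH => -[|i] /=.
Qed.

Lemma eval_erase_aux s env g :
  eval s env (erase_aux g) = eval (input_state (st_E s)) env g.
Proof.
elim: g env => //=.
- by case=> [|n] args env //=; rewrite andbF.
- by move=> g IH env; rewrite IH.
- by move=> g1 IH1 g2 IH2 env; rewrite IH1 IH2.
- by move=> g1 IH1 g2 IH2 env; rewrite IH1 IH2.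
- by move=> g IH env; apply: eq_existsb => d; rewrite IH.
- by move=> g IH env; apply: eq_forallb => d; rewrite IH.
Qed.

Lemma eval_qf_map E (f : D -> D) env g : qf g ->
  {in env &, forall u v, E (f u) (f v) = E u v /\ (f u == f v) = (u == v)} ->
  eval (input_state E) (map f env) g = eval (input_state E) env g.
Proof.
move=> + f_iso; have in_env i a : onth env i = Some a -> a \in env.
  by move=> env_i; apply/onthP; exists i.
elim: g => //=.
- case=> [|n] args _; last by rewrite !andbF.
  have -> : pmap (onth (map f env)) args = map f (pmap (onth env) args).
    by elim: args => //= i args ->; rewrite onth_map; case: onth.
  have : {subset pmap (onth env) args <= env}.
    by move=> a; rewrite mem_pmap => /mapP[i _ /esym /in_env].
  rewrite size_map; case: (pmap _ args) => [|a [|b [|c t]]] //= sub_env.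
  by rewrite (f_iso a b (sub_env a _) (sub_env b _)).1 ?inE ?eqxx ?orbT.
- move=> i j _; rewrite !onth_map.
  case Ei: (onth env i) => [a|] //=; case Ej: (onth env j) => [b|] //=.
  exact: (f_iso a b (in_env i a Ei) (in_env j b Ej)).2.
- by move=> g IH /IH ->.
- by move=> g1 IH1 g2 IH2 /andP[/IH1 -> /IH2 ->].
- by move=> g1 IH1 g2 IH2 /andP[/IH1 -> /IH2 ->].
Qed.

(* Profiles range over a finite type depending only on [size p], which makes the
   number of iterations in the update formulas independent of the domain. *)
Definition profile_type m := ({ffun 'I_m -> bool * bool * bool} * bool)%type.

Definition profile E (p : seq D) x : profile_type (size p) :=
  ([ffun j => (E x (tnth (in_tuple p) j), E (tnth (in_tuple p) j) x,
               x == tnth (in_tuple p) j)], E x x).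

Lemma profile_eq E p x x' : profile E p x = profile E p x' -> E x' x' = E x x /\
  forall c, c \in p -> [/\ E x' c = E x c, E c x' = E c x & (x' == c) = (x == c)].
Proof.
case=> prof_p loop; split=> // c /(tnthP (in_tuple p))[j ->].
by move/ffunP: prof_p => /(_ j); rewrite !ffunE; case.
Qed.

Lemma eval_qf_profile E p phi x y x' y' : qf phi ->
  profile E p x = profile E p x' -> profile E p y = profile E p y' ->
  unlinked E x y -> unlinked E x' y' ->
  eval (input_state E) (p ++ [:: x'; y']) phi = eval (input_state E) (p ++ [:: x; y]) phi.
Proof.
move=> qf_phi /profile_eq[Exx' px] /profile_eq[Eyy' py].
move=> /and3P[/negbTE nxy /negbTE nExy /negbTE nEyx].
move=> /and3P[/negbTE nxy' /negbTE nExy' /negbTE nEyx'].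
(* f fixes the parameters: one equal to x is also equal to x', by the profiles. *)
pose f z := if z == x then x' else if z == y then y' else z.
have fp c : c \in p -> f c = c.
  move=> cp; have [_ _ eqx] := px c cp; have [_ _ eqy] := py c cp.
  by rewrite /f; case: eqP => [cx|_]; [|case: eqP => [cy|//]]; apply/eqP;
    rewrite ?eqx ?eqy ?cx ?cy eqxx.
have fx : f x = x' by rewrite /f eqxx.
have fy : f y = y' by rewrite /f eq_sym nxy eqxx.
have fpp : map f p = p by rewrite -[RHS]map_id; apply/eq_in_map => c /fp.
have -> : p ++ [:: x'; y'] = map f (p ++ [:: x; y]) by rewrite map_cat fpp /= fx fy.
apply: eval_qf_map => // u v; rewrite !mem_cat !inE.
move=> /or3P[up|/eqP->|/eqP->] /or3P[vp|/eqP->|/eqP->];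
  rewrite ?fx ?fy; try rewrite (fp u up); try rewrite (fp v vp);
  try (have [Exu Eux eqxu] := px u up; have [Eyu Euy eqyu] := py u up);
  try (have [Exv Evx eqxv] := px v vp; have [Eyv Evy eqyv] := py v vp).
all: by rewrite ?(eq_sym u) ?(eq_sym v) ?Exx' ?Eyy' ?nExy ?nExy' ?nEyx ?nEyx'
  ?Exu ?Eux ?eqxu ?Eyu ?Euy ?eqyu ?Exv ?Evx ?eqxv ?Eyv ?Evy ?eqyv
  ?(eq_sym y) ?(eq_sym y') ?nxy ?nxy' ?eqxx.
Qed.

End Semantics.

(** * Update formulas and guards for insertions *)

(* The auxiliary relation 0 stores reachability; [reachF i j] reads it, adding the
   diagonal, which an empty auxiliary relation lacks in the initial state. *)
Definition reachF i j := FOr (FRel (SymAux 0) [:: i; j]) (FEq i j).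

Section InsertionFormulas.
Variables (m : nat) (phi : formula).

Definition nhops := hop_bound (profile_type m).
Definition env_bound := m + nhops + 5.

(* Places the parameters of phi at sh, sh+1, ..., its two tuple variables at i and j,
   and pushes any other variable beyond every environment met below. *)
Definition param_ren sh i j k :=
  if k < m then sh + k else if k == m then i else if k == m.+1 then j else k + env_bound.

Definition new_edgeF sh i j := rename (param_ren sh i j) (erase_aux phi).
Definition hopF sh i j := FOr (reachF i j) (new_edgeF sh i j).

Fixpoint hop_powF n sh i j :=
  if n is n'.+1 then FEx (FAnd (hopF sh.+1 i.+1 0) (hop_powF n' sh.+1 0 j.+1))
  else hopF sh i j.

Definition ins_updF := hop_powF nhops 0 m m.+1.

Definition guardF :=
  FEx (FEx (FAnd (FOr (FRel SymE [:: 1; 0]) (new_edgeF 2 1 0)) (hop_powF nhops 2 0 1))).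

End InsertionFormulas.

Section InsertionSemantics.
Variable D : finType.
Implicit Types (s : state D) (env a : seq D) (E : rel D).

Definition stT s x y := st_aux s 0 [:: x; y] || (x == y).
Definition ins_edge E a phi x y := E x y || eval (input_state E) (a ++ [:: x; y]) phi.

Lemma eval_E s env i j x y : onth env i = Some x -> onth env j = Some y ->
  eval s env (FRel SymE [:: i; j]) = st_E s x y.
Proof. by move=> /= -> ->. Qed.

Lemma eval_reachF s env i j x y : onth env i = Some x -> onth env j = Some y ->
  eval s env (reachF i j) = stT s x y.
Proof. by move=> /= -> ->. Qed.

Lemma eval_new_edgeF s a phi env sh i j x y :
  (forall k, k < size a -> onth env (sh + k) = onth a k) ->
  onth env i = Some x -> onth env j = Some y -> size env <= env_bound (size a) ->
  eval s env (new_edgeF (size a) phi sh i j) =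
  eval (input_state (st_E s)) (a ++ [:: x; y]) phi.
Proof.
move=> env_a env_i env_j env_size; rewrite -eval_erase_aux; apply: eval_rename => k.
rewrite /param_ren onth_cat; case: ltnP => [//|ge_k]; first exact: env_a.
case: eqP => [->|ne_k]; first by rewrite env_i subnn.
case: eqP => [->|ne_k']; first by rewrite env_j subSnn.
rewrite !onth_default //; first by move: ge_k ne_k ne_k' => /=; lia.
exact: leq_trans env_size (leq_addl _ _).
Qed.

Lemma eval_hopF s a phi env sh i j x y :
  (forall k, k < size a -> onth env (sh + k) = onth a k) ->
  onth env i = Some x -> onth env j = Some y -> size env <= env_bound (size a) ->
  eval s env (hopF (size a) phi sh i j) =
  stT s x y || eval (input_state (st_E s)) (a ++ [:: x; y]) phi.
Proof.
move=> env_a env_i env_j env_size.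
by rewrite eval_FOr (eval_reachF s env_i env_j) (eval_new_edgeF s phi env_a env_i env_j env_size).
Qed.

Lemma eval_hop_powF s a phi n : forall env sh i j x y,
  (forall k, k < size a -> onth env (sh + k) = onth a k) ->
  onth env i = Some x -> onth env j = Some y -> size env + n <= env_bound (size a) ->
  eval s env (hop_powF (size a) phi n sh i j) =
  rel_pow (fun x y => stT s x y || eval (input_state (st_E s)) (a ++ [:: x; y]) phi) n x y.
Proof.
elim: n => [|n IH] env sh i j x y env_a env_i env_j env_size.
  by apply: eval_hopF; rewrite // -(addn0 (size env)).
have env_a' z k : k < size a -> onth (z :: env) (sh.+1 + k) = onth a k by move/env_a.
rewrite eval_FEx; apply: eq_existsb => z.
have env_z : onth (z :: env) 0 = Some z by [].
rewrite eval_FAnd (eval_hopF s phi (env_a' z) (env_i : onth (z :: env) i.+1 = _) env_z) /=;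
  last by move: env_size; lia.
by rewrite (IH (z :: env) sh.+1 0 j.+1 z y) //= addSnnS.
Qed.

Lemma onth_cat_size a x y : onth (a ++ [:: x; y]) (size a) = Some x.
Proof. by rewrite onth_cat ltnn subnn. Qed.

Lemma onth_cat_sizeS a x y : onth (a ++ [:: x; y]) (size a).+1 = Some y.
Proof. by rewrite onth_cat ltnNge leqnSn /= subSnn. Qed.

Lemma apply_insertion r a E phi :
  rq_mu r = FOr (FRel SymE [:: rq_par r; (rq_par r).+1]) phi -> size a = rq_par r ->
  apply_change r a E =2 ins_edge E a phi.
Proof.
move=> mu_r size_a x y; rewrite /apply_change mu_r -size_a.
by congr (_ || _); apply: eval_E; rewrite ?onth_cat_size ?onth_cat_sizeS.
Qed.

Lemma ins_edge_profile E a phi : qf phi -> forall x y x' y',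
  profile E a x = profile E a x' -> profile E a y = profile E a y' ->
  unlinked E x y -> unlinked E x' y' -> ins_edge E a phi x y = ins_edge E a phi x' y'.
Proof.
move=> qf_phi x y x' y' px py uxy uxy'.
rewrite /ins_edge (eval_qf_profile qf_phi px py uxy uxy').
by case/and3P: uxy => _ /negbTE-> _; case/and3P: uxy' => _ /negbTE-> _.
Qed.

Definition reach_inv s := forall x y, stT s x y = connect (st_E s) x y.

Lemma hop_ins_edge s a phi : reach_inv s ->
  (fun x y => stT s x y || eval (input_state (st_E s)) (a ++ [:: x; y]) phi) =2
  hop (st_E s) (ins_edge (st_E s) a phi).
Proof.
move=> reach x y; rewrite /hop /ins_edge reach orbA.
by case: (boolP (st_E s x y)) => [/connect1->|]; rewrite ?orbF.
Qed.

Lemma eval_ins_updF s a phi x y : reach_inv s -> qf phi ->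
  ~ has_cycle (ins_edge (st_E s) a phi) ->
  eval s (a ++ [:: x; y]) (ins_updF (size a) phi) = connect (ins_edge (st_E s) a phi) x y.
Proof.
move=> reach qf_phi acyc.
have sub_E : subrel (st_E s) (ins_edge (st_E s) a phi) by move=> u v Euv; rewrite /ins_edge Euv.
rewrite (connect_hop sub_E (ins_edge_profile qf_phi)) // -(eq_rel_pow (hop_ins_edge a phi reach)).
apply: eval_hop_powF; rewrite ?onth_cat_size ?onth_cat_sizeS //.
  by move=> k lt_k; rewrite onth_cat lt_k.
by rewrite size_cat /= /env_bound; lia.
Qed.

Lemma eval_guardF s a phi : reach_inv s -> qf phi ->
  eval s a (guardF (size a) phi) <-> has_cycle (ins_edge (st_E s) a phi).
Proof.
move=> reach qf_phi.
have sub_E : subrel (st_E s) (ins_edge (st_E s) a phi) by move=> u v Euv; rewrite /ins_edge Euv.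
rewrite (has_cycle_hop sub_E (ins_edge_profile qf_phi)).
have env_a u v k : k < size a -> onth [:: v, u & a] (2 + k) = onth a k by [].
have env_u u v : onth [:: v, u & a] 1 = Some u by [].
have env_v u v : onth [:: v, u & a] 0 = Some v by [].
have -> : eval s a (guardF (size a) phi) = [exists u, exists v,
    ins_edge (st_E s) a phi u v &&
    rel_pow (hop (st_E s) (ins_edge (st_E s) a phi)) (nhops (size a)) v u].
  rewrite eval_FEx; apply: eq_existsb => u; rewrite eval_FEx; apply: eq_existsb => v.
  rewrite eval_FAnd eval_FOr (eval_E s (env_u u v) (env_v u v)).
  rewrite (eval_new_edgeF s phi (env_a u v) (env_u u v) (env_v u v)) /=;
    last by rewrite /env_bound; lia.
  rewrite -(eq_rel_pow (hop_ins_edge a phi reach)).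
  by rewrite (eval_hop_powF s phi (env_a u v) (env_v u v) (env_u u v)) //= /env_bound; lia.
split=> [/existsP[u /existsP[v uv]]|[u [v uv]]]; first by exists u, v.
by apply/existsP; exists u; apply/existsP; exists v.
Qed.

End InsertionSemantics.

(** * Deletions *)

(* Variables 0..3 hold the deleted edge (a, b) and the tuple (x, y); the two
   quantifiers bind u (index 1) and w (index 0). *)
Definition del_updF :=
  FAnd (reachF 2 3) (FOr (FNot (FRel SymE [:: 0; 1]))
    (FOr (FNot (FAnd (reachF 2 0) (reachF 1 3)))
      (FEx (FEx (FAnd (reachF 4 1)
        (FAnd (FAnd (FRel SymE [:: 1; 0]) (FNot (FAnd (FEq 2 1) (FEq 3 0))))
          (FAnd (reachF 0 5) (FAnd (reachF 1 2) (FNot (reachF 0 2)))))))))).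

Section Deletion.
Variables (D : finType) (E : rel D) (a b : D).

Definition del_edge u w := E u w && ~~ ((a == u) && (b == w)).

(* After deleting (a, b) from a DAG, x reaches y iff it did and, in case a path used
   (a, b), some other edge (u, w) between x and y leaves the vertices reaching a. *)
Definition del_reach (T : rel D) x y :=
  T x y && [|| ~~ E a b, ~~ (T x a && T b y) |
   [exists u, exists w, T x u && (del_edge u w && (T w y && (T u a && ~~ T w a)))]].

Lemma eval_del_updF s x y : st_E s = E ->
  eval s [:: a; b; x; y] del_updF = del_reach (stT s) x y.
Proof. by move=> sE; rewrite /del_reach /del_edge -sE. Qed.

Lemma eq_del_reach T T' : T =2 T' -> del_reach T =2 del_reach T'.
Proof.
move=> eT x y; rewrite /del_reach !eT; congr (_ && [|| _, _ | _]).
by apply: eq_existsb => u; apply: eq_existsb => w; rewrite !eT.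
Qed.

Lemma connect_del_sub x y : connect del_edge x y -> connect E x y.
Proof. by apply: connect_sub => u w /andP[/connect1]. Qed.

Lemma connect_del_avoid x y : connect E x y ->
  (E a b -> ~~ (connect E x a && connect E b y)) -> connect del_edge x y.
Proof.
move/connectP=> [p + ->]; elim: p x => [|z p IH] x /=; first by move=> _ _; exact: connect0.
case/andP=> Exz pz avoid_ab.
have Dxz : del_edge x z.
  rewrite /del_edge Exz /=; apply/negP => /andP[/eqP ax /eqP bz]; subst.
  by move: (avoid_ab Exz); rewrite connect0 /=; apply/negP/negPn/connectP; exists p.
apply: connect_trans (connect1 Dxz) (IH z pz _) => Eab.
apply/negP => /andP[za bl]; move: (avoid_ab Eab).
by rewrite (connect_trans (connect1 Exz) za) bl.
Qed.

Lemma path_del_exit p x : path del_edge x p -> connect E x a -> ~~ connect E (last x p) a ->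
  exists u w, [&& connect E x u, del_edge u w, connect E w (last x p), connect E u a
                & ~~ connect E w a].
Proof.
elim: p x => [|z p IH] x /=; first by move=> _ ->.
case/andP=> Dxz pz xa; have [za|nza] := boolP (connect E z a).
  move=> /(IH z pz za)[u [w /and5P[zu uw wl ua wa]]]; exists u, w.
  by rewrite (connect_trans (connect_del_sub (connect1 Dxz)) zu) uw wl ua wa.
move=> _; exists x, z; rewrite connect0 Dxz xa nza /= andbT.
by apply: connect_del_sub; apply/connectP; exists p.
Qed.

Lemma connect_del_edge : ~ has_cycle E -> forall x y,
  connect del_edge x y = del_reach (connect E) x y.
Proof.
move=> acyc x y; apply/idP/idP.
- move=> Dxy; rewrite /del_reach (connect_del_sub Dxy) /=.
  have [Eab|//] := boolP (E a b).
  have [/andP[xa bY]|//] := boolP (connect E x a && connect E b y).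
  move/connectP: Dxy => [p pth def_y].
  have yna : ~~ connect E (last x p) a.
    rewrite -def_y; apply/negP => ya; apply: acyc; exists a, b.
    by rewrite Eab (connect_trans bY ya).
  have [u [w exit_uw]] := path_del_exit pth xa yna.
  by apply/existsP; exists u; apply/existsP; exists w; rewrite -def_y in exit_uw.
- case/andP=> Exy /or3P[nEab|nxab|/existsP[u /existsP[w /and5P[xu uw wy ua wa]]]].
  + by apply: connect_del_avoid Exy _ => Eab; rewrite Eab in nEab.
  + exact: connect_del_avoid Exy (fun _ => nxab).
  + apply: connect_trans (connect_del_avoid xu _) (connect_trans (connect1 uw) _).
      move=> Eab; apply/negP => /andP[_ bu]; apply: acyc; exists a, b.
      by rewrite Eab (connect_trans bu ua).
    by apply: connect_del_avoid wy _; rewrite (negbTE wa).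
Qed.

End Deletion.

(** * The dynamic program *)

Definition ins_rule (r : rquery) (phi : formula) :=
  rq_mu r = FOr (FRel SymE [:: rq_par r; (rq_par r).+1]) phi /\ qf phi.

Definition upd_reach (r : rquery) (_ : nat) : formula :=
  if rq_mu r is FOr (FRel SymE _) phi then ins_updF (rq_par r) phi else del_updF.

Definition reach_prog := DynProg [:: 2] 0 upd_reach.

Section Run.
Variable D : finType.
Implicit Types s : state D.

Definition aux_exact s := forall t, st_aux s 0 t = reachQ (st_E s) t.

Lemma aux_exact_reach_inv s : aux_exact s -> reach_inv s.
Proof.
move=> exact_s u v; rewrite /stT exact_s /=.
by case: eqP => [->|]; rewrite ?connect0 ?orbT ?orbF.
Qed.

Lemma reach_inv_init : reach_inv (init_state D).
Proof.
move=> u v; rewrite /stT /=; apply/eqP/idP => [->|]; first exact: connect0.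
by case/connectP=> [[|z p]] //= _ ->.
Qed.

Lemma eq_has_cycle (e e' : rel D) : e =2 e' -> has_cycle e <-> has_cycle e'.
Proof.
move=> ee'; split=> -[u [v /andP[euv cvu]]]; exists u, v.
  by rewrite -ee' euv -(eq_connect ee') cvu.
by rewrite ee' euv (eq_connect ee') cvu.
Qed.

Lemma step_aux c s t : st_aux (step reach_prog c s) 0 t =
  (size t == 2) && eval s (c.2 ++ t) (upd_reach c.1 0).
Proof. by []. Qed.

Lemma step_insertion_exact s r a phi : reach_inv s -> ins_rule r phi ->
  size a = rq_par r -> ~ has_cycle (st_E (step reach_prog (r, a) s)) ->
  aux_exact (step reach_prog (r, a) s).
Proof.
move=> reach [mu_r qf_phi] size_a acyc [|u [|v [|w t]]] //.
have ins_r := apply_insertion (st_E s) mu_r size_a.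
rewrite step_aux /= /upd_reach mu_r -size_a eval_ins_updF //.
  by rewrite (eq_connect ins_r).
by move=> /(eq_has_cycle ins_r).
Qed.

Lemma step_deletion_exact s a : reach_inv s -> ~ has_cycle (st_E s) -> size a = 2 ->
  aux_exact (step reach_prog (del_E, a) s).
Proof.
case: a => [|x [|y [|]]] // reach acyc _ [|u [|v [|w t]]] //.
rewrite step_aux (_ : upd_reach del_E 0 = del_updF) // (eval_del_updF (E := st_E s)) //.
by rewrite (eq_del_reach _ _ _ reach) -connect_del_edge.
Qed.

Lemma good_run_exact (Dl : seq rquery) :
  (forall r, mem_rq r Dl -> (exists phi, ins_rule r phi) \/ r = del_E) ->
  forall alpha s, good_run reach_prog Dl s alpha -> reach_inv s -> ~ has_cycle (st_E s) ->
    let s' := foldl (fun s c => step reach_prog c s) s alpha in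
    reach_inv s' /\ (alpha <> [::] -> aux_exact s').
Proof.
move=> Dl_rules; elim=> [|[r a] alpha IH] s //= [r_Dl size_a acyc' run'] reach acyc.
have exact' : aux_exact (step reach_prog (r, a) s).
  have [[phi r_phi]|r_del] := Dl_rules r r_Dl.
    exact: step_insertion_exact r_phi size_a acyc'.
  by subst r; exact: step_deletion_exact reach acyc size_a.
have [reach'' exact''] := IH _ run' (aux_exact_reach_inv exact') acyc'.
by split=> // _; case: alpha {IH reach''} run' exact'' => [|c alpha] _ //; apply.
Qed.

Lemma run_exact (Dl : seq rquery) :
  (forall r, mem_rq r Dl -> (exists phi, ins_rule r phi) \/ r = del_E) ->
  forall alpha, good_run reach_prog Dl (init_state D) alpha ->
  reach_inv (run reach_prog alpha) /\ (alpha <> [::] -> aux_exact (run reach_prog alpha)).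
Proof.
move=> Dl_rules alpha /good_run_exact; apply=> //; first exact: reach_inv_init.
by case=> u [v].
Qed.

End Run.

Lemma mem_rq_cat r l1 l2 : mem_rq r (l1 ++ l2) -> mem_rq r l1 \/ mem_rq r l2.
Proof. by elim: l1 => [|r' l1 IH] /=; [right | case=> [->|/IH]; tauto]. Qed.

Lemma qf_insertion_rule r : is_qf_insertion r -> exists phi, ins_rule r phi.
Proof. by case=> + [_ [phi mu_r]]; rewrite mu_r => /andP[_ qf_phi]; exists phi. Qed.

Theorem theorem4p3 (Delta : seq rquery) :
  (forall r, mem_rq r Delta -> is_qf_insertion r) ->
  exists P : dynprog,
    maintains_reach_dag P (Delta ++ [:: ins_E; del_E]) /\
    forall r, mem_rq r Delta ->
      exists gamma : formula,
        forall (D : finType) (alpha : seq (rquery * seq D)),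
          good_run P (Delta ++ [:: ins_E; del_E]) (init_state D) alpha ->
          forall a : seq D, size a = rq_par r ->
            (eval (run P alpha) a gamma <->
             has_cycle (apply_change r a (st_E (run P alpha)))).
Proof.
move=> Delta_qf.
have rules r : mem_rq r (Delta ++ [:: ins_E; del_E]) ->
    (exists phi, ins_rule r phi) \/ r = del_E.
  case/mem_rq_cat=> [/Delta_qf/qf_insertion_rule|/= [->|[->|//]]]; [by left | | by right].
  by left; exists (FAnd (FEq 0 2) (FEq 1 3)).
exists reach_prog; split.
  split=> //; split=> // D alpha nonempty /(run_exact rules)[_ exact_run].
  exact: exact_run nonempty.
move=> r /Delta_qf/qf_insertion_rule[phi [mu_r qf_phi]].
exists (guardF (rq_par r) phi) => D alpha /(run_exact rules)[reach _] a size_a.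
rewrite (eq_has_cycle (apply_insertion _ mu_r size_a)) -size_a.
exact: eval_guardF.
Qed.
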